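(* Let $n\ge3$ and let $L$ and ${}^*L=e^{\sigma(x)}L+\beta$ be as in the context. Define $K_{ijk}=\frac{1}{L}\big[c_{ijk}-(h_{ij}M_k+h_{kj}M_i+h_{ki}M_j)\big]$ with $M_i=\frac{c_i}{n+1}$, and ${}^*K_{ijk}$ by the same formula built from ${}^*L$. Then ${}^*K_{ijk}=e^{\sigma(x)}K_{ijk}$.
   Context: $M$ is a smooth manifold of dimension $n$ with local coordinates $(x^i)$ and induced fiber coordinates $(y^i)$ on $TM$. $L(x,y)$ is a Finsler metric: positive and smooth for $y\neq0$, positively homogeneous of degree 1 in $y$, with positive definite fundamental tensor $g_{ij}=\frac12\frac{\partial^2L^2}{\partial y^i\partial y^j}$ and inverse $g^{ij}$. $\sigma(x)$ is a smooth function on $M$ and $\beta(x,y)=b_i(x)y^i$ is a 1-form; the conformal $\beta$-change is ${}^*L=e^{\sigma(x)}L+\beta$, assumed to be again a Finsler metric. Notation: $l_i=\partial L/\partial y^i$, $h_{ij}=g_{ij}-l_il_j$, $c_{ijk}=\frac12\partial g_{ij}/\partial y^k$, $c_i=g^{jk}c_{ijk}$. Quantities built from ${}^*L$ by the same formulas (using ${}^*g_{ij}$ and its inverse ${}^*g^{ij}$) are denoted with a left asterisk. *)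

(* Finsler geometry in a local chart: points x and
   fiber coordinates y are row vectors in R^n; all tensors are computed from
   y-derivatives at a fixed x. *)
From HB Require Import structures.
From mathcomp Require Import all_boot all_order all_algebra.
From mathcomp Require Import all_classical all_reals all_analysis.
Set Implicit Arguments. Unset Strict Implicit. Unset Printing Implicit Defensive.
Import Order.TTheory GRing.Theory Num.Theory.
Import numFieldNormedType.Exports.
Local Open Scope ring_scope.

Section Finsler.
Variables (R : realType) (n : nat).
Implicit Types (F : 'rV[R]_n -> R) (y : 'rV[R]_n).

Definition ebase (i : 'I_n) : 'rV[R]_n := delta_mx 0 i.

Definition pd (i : 'I_n) (F : 'rV[R]_n -> R) : 'rV[R]_n -> R :=
  fun y => 'D_(ebase i) F y.

Definition iterpd (s : seq 'I_n) F : 'rV[R]_n -> R := foldr pd F s.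

Definition smooth_off0 F : Prop :=
  forall (s : seq 'I_n) y, y != 0 -> differentiable (iterpd s F) y.

Definition gF F y : 'M[R]_n :=
  \matrix_(i, j) (2^-1 * pd j (pd i (fun z => F z ^+ 2)) y).

Definition ginv F y : 'M[R]_n := invmx (gF F y).

Definition posdef (A : 'M[R]_n) : Prop :=
  forall v : 'rV[R]_n, v != 0 -> 0 < (v *m A *m v^T) 0 0.

(* Finsler metric (at a fixed point x of M) *)
Definition is_finsler F : Prop :=
  [/\ forall y, y != 0 -> 0 < F y,
      forall y (lam : R), y != 0 -> 0 < lam -> F (lam *: y) = lam * F y,
      smooth_off0 F &
      forall y, y != 0 -> posdef (gF F y)].

Definition lF F (i : 'I_n) y : R := pd i F y.
Definition hF F (i j : 'I_n) y : R := gF F y i j - lF F i y * lF F j y.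
Definition cF F (i j k : 'I_n) y : R := 2^-1 * pd k (fun z => gF F z i j) y.
Definition cvF F (i : 'I_n) y : R :=
  \sum_(j < n) \sum_(k < n) ginv F y j k * cF F i j k y.
Definition MF F (i : 'I_n) y : R := cvF F i y / (n.+1)%:R.
Definition KF F (i j k : 'I_n) y : R :=
  (F y)^-1 * (cF F i j k y -
    (hF F i j y * MF F k y + hF F k j y * MF F i y + hF F k i y * MF F j y)).

Definition betaF (b : 'rV[R]_n) y : R := \sum_(i < n) b 0 i * y 0 i.

Definition conf_beta F (s : R) (b : 'rV[R]_n) : 'rV[R]_n -> R :=
  fun y => expR s * F y + betaF b y.

End Finsler.

(* At a point y, K_ijk only depends on the 3-jet of L at y.  With l, P, T the
   first, second and third y-derivatives of L, one has g = l l^T + L P and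
   c_ijk = (P_ik l_j + l_i P_jk + l_k P_ij + L T_ijk) / 2, and the change
   *L = a L + beta (a = e^sigma) turns the jet into (a L + beta, a l + b, a P, a T).
   Euler's relations for the 1-homogeneous L (y.l = L, y.P = 0, y.T = -P) give
   *c = rho c + (a/2)(P_jk m_i + P_ik m_j + P_ij m_k), with rho = a *L / L and
   m = b - (beta/L) l, while *g^-1 is rho^-1 g^-1 up to terms killed by y; hence
   *c_i = c_i + (n+1) m_i / (2 *L).  The m-terms then cancel exactly in *K, which
   leaves *K = (rho L / *L) K = a K.  The symmetry of the third derivatives is
   Schwarz's theorem, obtained from the mean value theorem. *)

From HB Require Import structures.
From mathcomp Require Import all_boot all_order all_algebra.
From mathcomp Require Import all_classical all_reals all_analysis.
From mathcomp Require Import ring.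
Set Implicit Arguments. Unset Strict Implicit. Unset Printing Implicit Defensive.
Import Order.TTheory GRing.Theory Num.Theory.
Import numFieldNormedType.Exports.
Local Open Scope ring_scope.

Lemma sum_mul_delta (R : pzSemiRingType) n (u : 'I_n -> R) j :
  \sum_(i < n) u i * (i == j)%:R = u j.
Proof.
rewrite (bigD1 j) //= eqxx mulr1 big1 ?addr0 // => i /negbTE->.
by rewrite mulr0.
Qed.

Section JetTensors.
Variables (R : fieldType) (n : nat).
Implicit Types (L : R) (l : 'I_n -> R) (P : 'I_n -> 'I_n -> R).
Implicit Types (T c : 'I_n -> 'I_n -> 'I_n -> R) (g : 'M[R]_n).

Definition jet_metric L l P : 'M[R]_n := \matrix_(i, j) (l i * l j + L * P i j).

Definition jet_cartan L l P T i j k : R :=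
  2^-1 * (P i k * l j + l i * P j k + (l k * P i j + L * T i j k)).

Definition cartan_trace g c i : R := \sum_(j < n) \sum_(k < n) invmx g j k * c i j k.

Definition K_tensor L l g c i j k : R :=
  L^-1 * (c i j k - ((g i j - l i * l j) * (cartan_trace g c k / (n.+1)%:R)
     + (g k j - l k * l j) * (cartan_trace g c i / (n.+1)%:R)
     + (g k i - l k * l i) * (cartan_trace g c j / (n.+1)%:R))).

Lemma invmx_solve g (u v : 'I_n -> R) (s : R) : g \in unitmx -> s != 0 ->
  (forall j, \sum_(k < n) g j k * u k = s * v j) ->
  forall j, \sum_(k < n) invmx g j k * v k = u j / s.
Proof.
move=> g_unit s_neq0 guv j.
have gu : g *m \col_k u k = s *: \col_k v k.
  by apply/matrixP => p q; rewrite !mxE -guv; apply: eq_bigr => k _; rewrite mxE.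
have := congr1 (fun M : 'cV[R]_n => M j 0) (mulKmx g_unit (\col_k u k)).
rewrite gu -scalemxAr !mxE => <-; rewrite mulrC mulKf //.
by apply: eq_bigr => k _; rewrite mxE.
Qed.

End JetTensors.

Section EulerJet.
Variables (R : fieldType) (n : nat) (L : R) (l y : 'I_n -> R).
Variables (P : 'I_n -> 'I_n -> R) (T : 'I_n -> 'I_n -> 'I_n -> R).
Hypothesis L_neq0 : L != 0.
Hypothesis P_sym : forall i j, P i j = P j i.
Hypothesis T_sym12 : forall i j k, T i j k = T j i k.
Hypothesis T_sym23 : forall i j k, T i j k = T i k j.
Hypothesis euler_l : \sum_(i < n) y i * l i = L.
Hypothesis euler_P : forall j, \sum_(i < n) y i * P i j = 0.
Hypothesis euler_T : forall j k, \sum_(i < n) y i * T i j k = - P j k.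
Hypothesis g_unit : jet_metric L l P \in unitmx.

Local Notation A := (invmx (jet_metric L l P)).

Lemma euler_Pr i : \sum_(k < n) y k * P i k = 0.
Proof. by rewrite -[RHS](euler_P i); apply: eq_bigr => k _; rewrite P_sym. Qed.

Lemma jet_cartan_sym23 i j k : jet_cartan L l P T i j k = jet_cartan L l P T i k j.
Proof. by rewrite /jet_cartan (P_sym k j) (T_sym23 i k j); ring. Qed.

Lemma jet_cartan_euler i j : \sum_(k < n) y k * jet_cartan L l P T i j k = 0.
Proof.
have euler_Tr : \sum_(k < n) y k * T i j k = - P i j.
  by rewrite -euler_T; apply: eq_bigr => k _; rewrite T_sym23 T_sym12.
transitivity (\sum_(k < n) (2^-1 * l j * (y k * P i k) + 2^-1 * l i * (y k * P j k)
    + 2^-1 * P i j * (y k * l k) + 2^-1 * L * (y k * T i j k))).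
  by apply: eq_bigr => k _; rewrite /jet_cartan; ring.
rewrite !big_split -!mulr_sumr /=.
by rewrite !euler_Pr euler_l euler_Tr; ring.
Qed.

Lemma jet_cartan_euler_mid i k : \sum_(j < n) y j * jet_cartan L l P T i j k = 0.
Proof.
by rewrite -[RHS](jet_cartan_euler i k); apply: eq_bigr => j _; rewrite jet_cartan_sym23.
Qed.

Lemma invmx_jet_metric_sym j k : A j k = A k j.
Proof.
have gT : (jet_metric L l P)^T = jet_metric L l P.
  by apply/matrixP => p q; rewrite !mxE P_sym mulrC.
by rewrite -[in RHS]gT -trmx_inv mxE.
Qed.

Lemma invmx_jet_metric_l j : \sum_(k < n) A j k * l k = y j / L.
Proof.
apply: invmx_solve => // i.
transitivity (\sum_(k < n) (l i * (y k * l k) + L * (y k * P i k))).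
  by apply: eq_bigr => k _; rewrite mxE; ring.
by rewrite big_split -!mulr_sumr /= euler_l euler_Pr; ring.
Qed.

Lemma invmx_jet_metric_hessian i j :
  \sum_(k < n) A j k * (L * P i k) = (i == j)%:R - l i * (y j / L).
Proof.
transitivity (\sum_(k < n) (jet_metric L l P i k * A k j - l i * (A j k * l k))).
  by apply: eq_bigr => k _; rewrite mxE invmx_jet_metric_sym; ring.
rewrite sumrB -mulr_sumr invmx_jet_metric_l.
have := congr1 (fun M : 'M[R]_n => M i j) (mulmxV g_unit).
by rewrite !mxE => ->.
Qed.

Lemma trace_invmx_jet_hessian :
  \sum_(j < n) \sum_(k < n) A j k * (L * P j k) = n%:R - 1.
Proof.
under eq_bigr do rewrite invmx_jet_metric_hessian eqxx.
rewrite sumrB sumr_const card_ord; congr (_ - _).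
rewrite -[RHS](divff L_neq0) -euler_l mulr_suml.
by apply: eq_bigr => j _; ring.
Qed.

Lemma invmx_jet_hessian_euler (m : 'I_n -> R) i :
  \sum_(j < n) y j * m j = 0 ->
  \sum_(j < n) \sum_(k < n) A j k * (L * P i k) * m j = m i.
Proof.
move=> ym.
transitivity (\sum_(j < n) (m j * (j == i)%:R - l i / L * (y j * m j))).
  apply: eq_bigr => j _; rewrite -mulr_suml invmx_jet_metric_hessian eq_sym; ring.
by rewrite sumrB sum_mul_delta -mulr_sumr ym mulr0 subr0.
Qed.

End EulerJet.

Section ConformalBetaChange.
Variables (R : numFieldType) (n : nat) (L a : R) (l b y : 'I_n -> R).
Variables (P : 'I_n -> 'I_n -> R) (T : 'I_n -> 'I_n -> 'I_n -> R).

Local Notation beta := (\sum_(i < n) b i * y i).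
Local Notation L' := (a * L + beta).
Local Notation l' := (fun i => a * l i + b i).
Local Notation P' := (fun i j => a * P i j).
Local Notation T' := (fun i j k => a * T i j k).
Local Notation g := (jet_metric L l P).
Local Notation g' := (jet_metric L' l' P').
Local Notation c := (jet_cartan L l P T).
Local Notation c' := (jet_cartan L' l' P' T').

Hypothesis L_neq0 : L != 0.
Hypothesis a_neq0 : a != 0.
Hypothesis L'_neq0 : L' != 0.
Hypothesis P_sym : forall i j, P i j = P j i.
Hypothesis T_sym12 : forall i j k, T i j k = T j i k.
Hypothesis T_sym23 : forall i j k, T i j k = T i k j.
Hypothesis euler_l : \sum_(i < n) y i * l i = L.
Hypothesis euler_P : forall j, \sum_(i < n) y i * P i j = 0.
Hypothesis euler_T : forall j k, \sum_(i < n) y i * T i j k = - P j k.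
Hypothesis g_unit : g \in unitmx.
Hypothesis g'_unit : g' \in unitmx.

Local Notation rho := (a * L' / L).
Local Notation m := (fun i => b i - beta / L * l i).

Lemma conf_P_sym i j : P' i j = P' j i.
Proof. by rewrite /= P_sym. Qed.

Lemma conf_T_sym12 i j k : T' i j k = T' j i k.
Proof. by rewrite /= T_sym12. Qed.

Lemma conf_T_sym23 i j k : T' i j k = T' i k j.
Proof. by rewrite /= T_sym23. Qed.

Lemma conf_euler_l : \sum_(i < n) y i * l' i = L'.
Proof.
under eq_bigr do rewrite mulrDr mulrCA.
rewrite big_split -mulr_sumr euler_l /=; congr (_ + _).
by apply: eq_bigr => i _; rewrite mulrC.
Qed.

Lemma conf_euler_P j : \sum_(i < n) y i * P' i j = 0.
Proof. by under eq_bigr do rewrite mulrCA; rewrite -mulr_sumr euler_P mulr0. Qed.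

Lemma conf_euler_T j k : \sum_(i < n) y i * T' i j k = - P' j k.
Proof. by under eq_bigr do rewrite mulrCA; rewrite -mulr_sumr euler_T mulrN. Qed.

Lemma euler_m : \sum_(i < n) y i * m i = 0.
Proof.
under eq_bigr do rewrite mulrBr [y _ * (_ * _)]mulrCA.
rewrite sumrB -mulr_sumr euler_l divfK //; apply/eqP; rewrite subr_eq0.
by apply/eqP/eq_bigr => i _; rewrite mulrC.
Qed.

Lemma jet_cartan_conf i j k :
  c' i j k = rho * c i j k + a / 2 * (P j k * m i + P i k * m j + P i j * m k).
Proof. by rewrite /jet_cartan; field. Qed.

Lemma invmx_jet_metric_conf : exists u w : 'I_n -> R,
  forall j k, invmx g' j k = rho^-1 * invmx g j k + u j * y k + y j * w k.
Proof.
pose lr := \row_i l i; pose lr' := \row_i l' i.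
pose U := invmx g' *m lr^T; pose W := lr *m invmx g.
pose U' := invmx g' *m lr'^T; pose W' := lr' *m invmx g.
have W_euler k : W 0 k = y k / L.
  rewrite -(invmx_jet_metric_l L_neq0 P_sym euler_l euler_P g_unit) mxE.
  by apply: eq_bigr => p _; rewrite mxE (invmx_jet_metric_sym L l P_sym) mulrC.
have U'_euler j : U' j 0 = y j / L'.
  rewrite -(invmx_jet_metric_l L'_neq0 conf_P_sym conf_euler_l conf_euler_P g'_unit) mxE.
  by apply: eq_bigr => p _; rewrite !mxE.
have g_sub : g - rho^-1 *: g' = lr^T *m lr - rho^-1 *: (lr'^T *m lr').
  apply/matrixP => p q; rewrite !mxE !big_ord1 !mxE; field.
  by rewrite L_neq0 L'_neq0 a_neq0.
have A_sub : invmx g' - rho^-1 *: invmx g = U *m W - rho^-1 *: (U' *m W').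
  rewrite -!mulmxA [lr^T *m _]mulmxA [lr'^T *m _]mulmxA.
  rewrite scalemxAr -mulmxBr scalemxAl -mulmxBl -g_sub.
  rewrite mulmxBl mulmxV // mulmxBr mulmx1 -scalemxAl -scalemxAr.
  by rewrite mulmxA mulVmx // mul1mx.
clearbody U W U' W'.
exists (fun j => U j 0 / L), (fun k => - (rho^-1 * W' 0 k / L')) => j k.
have := congr1 (fun M : 'M[R]_n => M j k) A_sub.
rewrite !mxE !big_ord1 W_euler U'_euler => /eqP; rewrite subr_eq => /eqP->.
by field; rewrite L_neq0 L'_neq0 a_neq0.
Qed.

Lemma cartan_trace_conf_rescale i :
  cartan_trace g' c' i = rho^-1 * \sum_(j < n) \sum_(k < n) invmx g j k * c' i j k.
Proof.
have [u [w Ainv]] := invmx_jet_metric_conf.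
have c'_euler := jet_cartan_euler conf_P_sym conf_T_sym12 conf_T_sym23
  conf_euler_l conf_euler_P conf_euler_T.
have c'_euler_mid := jet_cartan_euler_mid conf_P_sym conf_T_sym12 conf_T_sym23
  conf_euler_l conf_euler_P conf_euler_T.
transitivity (\sum_(j < n) \sum_(k < n) (rho^-1 * (invmx g j k * c' i j k)
    + u j * (y k * c' i j k) + w k * (y j * c' i j k))).
  by apply: eq_bigr => j _; apply: eq_bigr => k _; rewrite Ainv; ring.
under eq_bigr do rewrite !big_split /=.
rewrite !big_split /= [X in _ + X + _]big1 => [|j _]; last first.
  by rewrite -mulr_sumr c'_euler mulr0.
rewrite [X in _ + _ + X]exchange_big [X in _ + _ + X]big1 => [|k _]; last first.
  by rewrite -mulr_sumr c'_euler_mid mulr0.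
rewrite !addr0 mulr_sumr; apply: eq_bigr => j _.
by rewrite mulr_sumr.
Qed.

Lemma contract_invmx_cartan_conf i :
  \sum_(j < n) \sum_(k < n) invmx g j k * c' i j k
    = rho * cartan_trace g c i + a * (n.+1)%:R / (2 * L) * m i.
Proof.
have hess_m := invmx_jet_hessian_euler L_neq0 P_sym euler_l euler_P g_unit i euler_m.
have hess_m' : \sum_(j < n) \sum_(k < n) invmx g j k * (L * P i j) * m k = m i.
  rewrite exchange_big -[RHS]hess_m; apply: eq_bigr => j _; apply: eq_bigr => k _.
  by rewrite (invmx_jet_metric_sym L l P_sym).
transitivity (\sum_(j < n) \sum_(k < n) (rho * (invmx g j k * c i j k)
    + a / (2 * L) * m i * (invmx g j k * (L * P j k))
    + a / (2 * L) * (invmx g j k * (L * P i k) * m j)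
    + a / (2 * L) * (invmx g j k * (L * P i j) * m k))).
  by apply: eq_bigr => j _; apply: eq_bigr => k _; rewrite jet_cartan_conf; field.
under eq_bigr do rewrite !big_split /= -!mulr_sumr.
rewrite !big_split /= -!mulr_sumr hess_m hess_m'.
rewrite (trace_invmx_jet_hessian L_neq0 P_sym euler_l euler_P g_unit) /cartan_trace.
by rewrite -[n.+1]addn1 natrD; field.
Qed.

Lemma cartan_trace_conf i :
  cartan_trace g' c' i = cartan_trace g c i + (n.+1)%:R * m i / (2 * L').
Proof.
rewrite cartan_trace_conf_rescale contract_invmx_cartan_conf.
(* [field] does not treat the bound sum [beta] as an atom, so it is named first. *)
set B := beta; field.
by rewrite L_neq0 L'_neq0 a_neq0.
Qed.

Lemma K_tensor_conf i j k : K_tensor L' l' g' c' i j k = a * K_tensor L l g c i j k.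
Proof.
rewrite /K_tensor !cartan_trace_conf jet_cartan_conf !mxE (P_sym k j) (P_sym k i).
set B := beta; field.
by rewrite [1 + _]addrC natr1 pnatr_eq0 L_neq0 L'_neq0.
Qed.

End ConformalBetaChange.

Section SecondDerivatives.
Context {R : realType} {V : normedModType R}.
Implicit Types (f : V -> R) (x y u v : V).

Lemma diff_remainder_ball f x : differentiable f x -> forall e : R, 0 < e ->
  exists2 r : R, 0 < r & forall w1 w2, `|w1| < r -> `|w2| < r ->
    `|f (w1 + x) - f (w2 + x) - 'd f x (w1 - w2)| <= e * (`|w1| + `|w2|).
Proof.
move=> /diff_locally /eqaddoP df e e0.
have /nbhs_norm0P[r r0 Hr] := df e e0.
exists r => // w1 w2 w1r w2r.
have rem_le w : `|w| < r -> `|f (w + x) - f x - 'd f x w| <= e * `|w|.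
  by move=> wr; have /= := Hr w wr; rewrite opprD addrA.
have dB : 'd f x (w1 - w2) = 'd f x w1 - 'd f x w2 by rewrite linearB.
rewrite dB (_ : _ - _ - _ = (f (w1 + x) - f x - 'd f x w1) - (f (w2 + x) - f x - 'd f x w2)).
  by rewrite mulrDr (le_trans (ler_normB _ _)) // lerD // rem_le.
by ring.
Qed.

Lemma is_derive_line f x u (t : R) : derivable f (x + t *: u) u ->
  is_derive t 1 (fun s : R => f (x + s *: u)) ('D_u f (x + t *: u)).
Proof.
move=> df.
have E : (fun h : R => h^-1 *: (f (x + (h *: 1 + t) *: u) - f (x + t *: u)))
    = (fun h : R => h^-1 *: (f (h *: u + (x + t *: u)) - f (x + t *: u))).
  apply: funext => h /=; congr (_ *: (f _ - _)).
  by rewrite -[h *: 1]/(h * 1) mulr1 scalerDl addrCA.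
by split; [move: df; rewrite /derivable /= E | rewrite /derive /= E].
Qed.

Lemma second_difference_mvt f y u v (h : R) : 0 < h ->
  (forall s t : R, 0 <= s <= h -> 0 <= t <= h -> differentiable f (y + s *: v + t *: u)) ->
  exists2 c : R, 0 <= c <= h &
    f (y + h *: v + h *: u) - f (y + h *: u) - (f (y + h *: v) - f y)
      = h * ('D_u f (y + h *: v + c *: u) - 'D_u f (y + c *: u)).
Proof.
move=> h0 df.
have hh : 0 <= h <= h by rewrite lexx ltW.
have h0h : 0 <= (0 : R) <= h by rewrite lexx ltW.
pose phi t := f (y + h *: v + t *: u) - f (y + t *: u).
have dphi t : 0 <= t <= h ->
    is_derive t 1 phi ('D_u f (y + h *: v + t *: u) - 'D_u f (y + t *: u)).
  move=> ht; apply: is_deriveB; apply: is_derive_line; apply: diff_derivable.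
    exact: df.
  by have := df 0 t h0h ht; rewrite scale0r addr0.
have phi_cont : {within `[0, h], continuous phi}%classic.
  apply: continuous_in_subspaceT => t; rewrite inE /= in_itv => /dphi dt.
  apply: differentiable_continuous; apply/derivable1_diffP.
  exact: (@ex_derive _ _ _ _ _ _ _ dt).
have [c c_in Hc] := MVT h0 (fun t t_in => dphi t (subset_itv_oo_cc t_in)) phi_cont.
exists c; first by move: c_in; rewrite in_itv /= => /andP[? ?]; rewrite !ltW.
by move: Hc; rewrite /phi !scale0r !addr0 subr0 => ->; rewrite mulrC.
Qed.

Lemma second_difference_estimate f y u v :
  (\forall z \near y, differentiable f z) -> differentiable ('D_u f) y ->
  forall e : R, 0 < e -> exists2 d : R, 0 < d & forall h : R, 0 < h -> h < d ->
  `|f (y + h *: v + h *: u) - f (y + h *: u) - (f (y + h *: v) - f y)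
     - h ^+ 2 * 'D_v ('D_u f) y| <= 2 * e * h ^+ 2 * (`|u| + `|v|).
Proof.
move=> df dDf e e0.
have [r r0 Hr] : exists2 r : R, 0 < r & forall z, `|y - z| < r -> differentiable f z.
  by move/nbhs_normP: df => [r r0 Hr]; exists r => // z Hz; apply: Hr.
have [r' r'0 Hr'] := diff_remainder_ball dDf e0.
pose M := `|u| + `|v| + 1.
have M0 : 0 < M by rewrite /M ltr_pwDr // addr_ge0.
exists (Num.min r r' / M); first by rewrite divr_gt0 // lt_min r0 r'0.
move=> h h0 hd.
have norm_le t s : 0 <= t <= h -> 0 <= s <= h -> `|t *: u + s *: v| <= h * (`|u| + `|v|).
  move=> /andP[t0 th] /andP[s0 sh].
  rewrite (le_trans (ler_normD _ _)) // !normrZ !ger0_norm // mulrDr.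
  by rewrite lerD // ler_wpM2r.
have norm_lt t s : 0 <= t <= h -> 0 <= s <= h -> `|t *: u + s *: v| < Num.min r r'.
  move=> ht hs; rewrite (le_lt_trans (norm_le t s ht hs)) //.
  rewrite (@le_lt_trans _ _ (h * M)) -?ltr_pdivlMr //.
  by apply: ler_wpM2l; [exact: ltW | rewrite /M lerDl].
have hh : 0 <= h <= h by rewrite lexx ltW.
have h0h : 0 <= (0 : R) <= h by rewrite lexx ltW.
have [|c hc ->] := @second_difference_mvt f y u v h h0.
  move=> s t hs ht; apply: Hr; rewrite -addrA opprD addrA subrr sub0r normrN addrC.
  by have := norm_lt t s ht hs; rewrite lt_min => /andP[].
have w1_lt : `|c *: u + h *: v| < r'.
  by have := norm_lt c h hc hh; rewrite lt_min => /andP[].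
have w2_lt : `|c *: u| < r'.
  by have := norm_lt c 0 hc h0h; rewrite scale0r addr0 lt_min => /andP[].
have dZ : 'd ('D_u f) y (h *: v) = h * 'D_v ('D_u f) y by rewrite linearZ -deriveE.
have hv : c *: u + h *: v - c *: u = h *: v by rewrite addrAC subrr add0r.
have p1 : c *: u + h *: v + y = y + h *: v + c *: u by rewrite addrC [c *: u + _]addrC addrA.
rewrite (_ : _ - _ = h * ('D_u f (c *: u + h *: v + y) - 'D_u f (c *: u + y)
    - 'd ('D_u f) y (c *: u + h *: v - c *: u))); last first.
  by rewrite hv dZ p1 [c *: u + y]addrC; ring.
rewrite normrM (ger0_norm (ltW h0)).
apply: (le_trans (ler_wpM2l (ltW h0) (Hr' _ _ w1_lt w2_lt))).
have := norm_le c 0 hc h0h; rewrite scale0r addr0 => w2_le.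
have w12_le := lerD (norm_le c h hc hh) w2_le.
apply: (le_trans (ler_wpM2l (ltW h0) (ler_wpM2l (ltW e0) w12_le))).
by rewrite [leLHS](_ : _ = 2 * e * h ^+ 2 * (`|u| + `|v|)) //; ring.
Qed.

Lemma derive2C f y u v :
  (\forall z \near y, differentiable f z) ->
  differentiable ('D_u f) y -> differentiable ('D_v f) y ->
  'D_v ('D_u f) y = 'D_u ('D_v f) y.
Proof.
move=> df dDuf dDvf.
set D1 := 'D_v ('D_u f) y; set D2 := 'D_u ('D_v f) y.
set K := `|u| + `|v|.
have K0 : 0 <= K by rewrite addr_ge0.
have D12_le e : 0 < e -> `|D1 - D2| <= 4 * e * K.
  move=> e0.
  have [d1 d10 H1] := second_difference_estimate v df dDuf e0.
  have [d2 d20 H2] := second_difference_estimate u df dDvf e0.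
  pose h := Num.min d1 d2 / 2.
  have hm : 0 < Num.min d1 d2 by rewrite lt_min d10 d20.
  have h0 : 0 < h by rewrite divr_gt0.
  have : h < Num.min d1 d2 by rewrite /h ltr_pdivrMr // ltr_pMr // ltr1n.
  rewrite lt_min => /andP[hd1 hd2].
  have := H1 h h0 hd1; have := H2 h h0 hd2.
  rewrite [y + h *: u + h *: v]addrAC -/D1 -/D2 [`|v| + _]addrC -/K.
  move=> B A; rewrite -(ler_pM2l (exprn_gt0 2 h0)).
  have -> : h ^+ 2 * `|D1 - D2| =
      `|(f (y + h *: v + h *: u) - f (y + h *: v) - (f (y + h *: u) - f y) - h ^+ 2 * D2)
      - (f (y + h *: v + h *: u) - f (y + h *: u) - (f (y + h *: v) - f y) - h ^+ 2 * D1)|.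
    rewrite -[X in X * _](ger0_norm (exprn_ge0 2 (ltW h0))) -normrM.
    by congr `|_|; ring.
  apply: (le_trans (ler_normB _ _)); apply: (le_trans (lerD B A)).
  by rewrite [leLHS](_ : _ = h ^+ 2 * (4 * e * K)) //; ring.
apply/eqP; rewrite -subr_eq0 -normr_le0.
apply/ler_addgt0Pr => e e0; rewrite add0r.
have K1 : 0 < K + 1 by rewrite ltr_wpDl.
have := D12_le (e / (4 * (K + 1))) (divr_gt0 e0 (mulr_gt0 (ltr0n _ 4) K1)).
move/le_trans; apply.
have -> : 4 * (e / (4 * (K + 1))) * K = e * (K / (K + 1)).
  by field; rewrite gt_eqF.
by apply: ler_piMr; [exact: ltW | rewrite ler_pdivrMr // mul1r lerDl ler01].
Qed.

End SecondDerivatives.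

Section FinslerDerivatives.
Context {R : realType} {n : nat}.
Local Notation V := 'rV[R]_n.
Implicit Types (f g F : V -> R) (x z : V).
Local Notation e_ i := (ebase R i).

Lemma near_neq0 z : z != 0 -> \forall w \near z, w != 0.
Proof. by move=> z0; apply: (@cvgr_neq0 _ _ _ (nbhs z) _ id z cvg_id z0). Qed.

Lemma derive_near_quotient f x (v : V) (c : R) :
  (\forall h \near ((0 : R)^')%classic, h^-1 *: (f (h *: v + x) - f x) = c) ->
  derivable f x v /\ 'D_v f x = c.
Proof.
move=> H; split; first exact: (is_cvg_near_cst c H).
by rewrite /derive; apply: cvg_lim => //; exact: (cvg_near_cst c H).
Qed.

Lemma derive_along_additive f x (v : V) :
  (forall h : R, f (h *: v + x) = h * f v + f x) -> derivable f x v /\ 'D_v f x = f v.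
Proof.
move=> fD; apply: derive_near_quotient; near=> h.
rewrite fD addrK -[h^-1 *: _]/(h^-1 * _) mulKf //.
near: h; exact: nbhs_dnbhs_neq.
Unshelve. all: by end_near. Qed.

Lemma pd_coord z (i k : 'I_n) :
  derivable (fun w : V => w 0 k) z (e_ i) /\ pd i (fun w : V => w 0 k) z = (i == k)%:R.
Proof.
have [|dk Dk] := @derive_along_additive (fun w : V => w 0 k) z (e_ i).
  by move=> h; rewrite !mxE.
by rewrite /pd Dk /ebase mxE eqxx eq_sym.
Qed.

Lemma pd_betaF (b : V) z (i : 'I_n) :
  derivable (betaF b) z (e_ i) /\ pd i (betaF b) z = b 0 i.
Proof.
have [|db Db] := @derive_along_additive (betaF b) z (e_ i).
  move=> h; rewrite /betaF mulr_sumr -big_split /=.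
  by apply: eq_bigr => k _; rewrite !mxE; ring.
split=> //; rewrite /pd Db /betaF -[RHS](sum_mul_delta (fun k => b 0 k)).
by apply: eq_bigr => k _; rewrite /ebase mxE eqxx eq_sym.
Qed.

Lemma pdD f g z (i : 'I_n) : derivable f z (e_ i) -> derivable g z (e_ i) ->
  pd i (fun w => f w + g w) z = pd i f z + pd i g z.
Proof. by move=> df dg; rewrite /pd -deriveD. Qed.

Lemma pdM f g z (i : 'I_n) : derivable f z (e_ i) -> derivable g z (e_ i) ->
  pd i (fun w => f w * g w) z = pd i f z * g z + f z * pd i g z.
Proof.
move=> df dg; have -> : (fun w => f w * g w) = f * g by apply/funext.
by rewrite /pd (deriveM df dg) addrC mulrC.
Qed.

Lemma pdZ (k : R) f z (i : 'I_n) : derivable f z (e_ i) ->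
  pd i (fun w => k * f w) z = k * pd i f z.
Proof. by move=> df; rewrite /pd -deriveMl. Qed.

Section Smooth.
Variables (F : V -> R) (z : V).
Hypotheses (F_smooth : smooth_off0 F) (z_neq0 : z != 0).

Lemma smooth_derivable s v : derivable (iterpd s F) z v.
Proof. exact/diff_derivable/F_smooth. Qed.

Lemma smooth_near s : \forall w \near z, differentiable (iterpd s F) w.
Proof. by apply: filterS (near_neq0 z_neq0) => w; apply: F_smooth. Qed.

Lemma pdC s (i j : 'I_n) :
  pd j (pd i (iterpd s F)) z = pd i (pd j (iterpd s F)) z.
Proof.
by apply: derive2C; [exact: smooth_near | exact: (F_smooth (i :: s)) | exact: (F_smooth (j :: s))].
Qed.

End Smooth.

Arguments smooth_derivable {F z} F_smooth z_neq0 s v.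

Lemma pdC_inner F z (i j k : 'I_n) : smooth_off0 F -> z != 0 ->
  pd k (pd j (pd i F)) z = pd k (pd i (pd j F)) z.
Proof.
move=> F_smooth z0; apply: near_eq_derive; apply: filterS (near_neq0 z0) => w w0.
exact: (pdC F_smooth w0 [::]).
Qed.

Lemma derive_coords F z (v : V) : differentiable F z ->
  'D_v F z = \sum_(i < n) v 0 i * pd i F z.
Proof.
move=> dF; rewrite deriveE // {1}(row_sum_delta v) linear_sum.
by apply: eq_bigr => i _; rewrite linearZ /pd deriveE.
Qed.

Lemma derive_homogeneous F z :
  (forall lam : R, 0 < lam -> F (lam *: z) = lam * F z) -> 'D_z F z = F z.
Proof.
move=> F_hom; apply: (derive_near_quotient _).2; near=> h.
have h1 : 0 < 1 + h.
  have : `|h| < 1 by near: h; apply: dnbhs0_lt.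
  by rewrite ltr_norml => /andP[? _]; rewrite -ltrBlDl sub0r.
rewrite (_ : h *: z + z = (1 + h) *: z) ?F_hom //; last by rewrite scalerDl scale1r addrC.
rewrite -[h^-1 *: _]/(h^-1 * _) mulrDl mul1r addrAC subrr add0r mulKf //.
near: h; exact: nbhs_dnbhs_neq.
Unshelve. all: by end_near. Qed.

Lemma pd_sum_coordM (H : 'I_n -> V -> R) z (k : 'I_n) :
  (forall i, derivable (H i) z (e_ k)) ->
  pd k (fun w : V => \sum_(i < n) w 0 i * H i w) z
    = \sum_(i < n) z 0 i * pd k (H i) z + H k z.
Proof.
move=> dH; rewrite -[H k z](sum_mul_delta (fun i => H i z)) -big_split /=.
rewrite /pd (_ : (fun w => _) = \sum_(i < n) (fun w : V => w 0 i * H i w)); last first.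
  by apply/funext => w; rewrite fct_sumE.
rewrite derive_sum => [|i]; last by apply: derivableM => //; exact: (pd_coord z k i).1.
apply: eq_bigr => i _; rewrite -/(pd k _ z) pdM; [|exact: (pd_coord z k i).1|exact: dH].
by rewrite (pd_coord z k i).2 eq_sym mulrC addrC.
Qed.

Section Euler.
Variable F : V -> R.
Hypothesis F_finsler : is_finsler F.

Let F_smooth : smooth_off0 F. Proof. by case: F_finsler. Qed.

Lemma euler_grad z : z != 0 -> \sum_(i < n) z 0 i * pd i F z = F z.
Proof.
case: F_finsler => _ F_hom _ _ z0.
rewrite -derive_coords; last exact: (F_smooth [::]).
by apply: derive_homogeneous => lam; apply: F_hom.
Qed.

Lemma euler_hessian z (j : 'I_n) : z != 0 -> \sum_(i < n) z 0 i * pd j (pd i F) z = 0.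
Proof.
move=> z0; have E : pd j (fun w : V => \sum_(i < n) w 0 i * pd i F w) z = pd j F z.
  by apply: near_eq_derive; apply: filterS (near_neq0 z0); apply: euler_grad.
rewrite (pd_sum_coordM (fun i => smooth_derivable F_smooth z0 [:: i] (e_ j))) in E.
by apply: (addIr (pd j F z)); rewrite add0r.
Qed.

Lemma euler_third z (j k : 'I_n) : z != 0 ->
  \sum_(i < n) z 0 i * pd k (pd j (pd i F)) z = - pd k (pd j F) z.
Proof.
move=> z0.
have E : pd k (fun w : V => \sum_(i < n) w 0 i * pd j (pd i F) w) z = 0.
  rewrite -[RHS](derive_cst 0 z (e_ k)).
  by apply: near_eq_derive; apply: filterS (near_neq0 z0) => w; apply: euler_hessian.
rewrite (pd_sum_coordM (fun i => smooth_derivable F_smooth z0 [:: j; i] (e_ k))) in E.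
by move/eqP: E; rewrite addr_eq0 => /eqP->; rewrite (pdC F_smooth z0 [::]).
Qed.

End Euler.

Section ConformalBetaDerivatives.
Variables (F : V -> R) (s : R) (b : V).
Hypothesis F_smooth : smooth_off0 F.

Lemma pd_conf_beta z : z != 0 -> forall i : 'I_n,
  pd i (conf_beta F s b) z = expR s * pd i F z + b 0 i.
Proof.
move=> z0 i; have dF : derivable F z (e_ i) := smooth_derivable F_smooth z0 [::] _.
have dsF : derivable (fun w => expR s * F w) z (e_ i) := derivableM (derivable_cst _ _ _) dF.
have [db Db] := pd_betaF b z i.
by rewrite /conf_beta (pdD dsF db) (pdZ _ dF) Db.
Qed.

Lemma pd2_conf_beta z : z != 0 -> forall i j : 'I_n,
  pd j (pd i (conf_beta F s b)) z = expR s * pd j (pd i F) z.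
Proof.
move=> z0 i j; have dF : derivable (pd i F) z (e_ j) := smooth_derivable F_smooth z0 [:: i] _.
have dsF : derivable (fun w => expR s * pd i F w) z (e_ j) :=
  derivableM (derivable_cst _ _ _) dF.
transitivity (pd j (fun w => expR s * pd i F w + b 0 i) z).
  by apply: near_eq_derive; apply: filterS (near_neq0 z0) => w w0; apply: pd_conf_beta.
by rewrite (pdD dsF (derivable_cst _ _ _)) (pdZ _ dF) /pd derive_cst addr0.
Qed.

Lemma pd3_conf_beta z : z != 0 -> forall i j k : 'I_n,
  pd k (pd j (pd i (conf_beta F s b))) z = expR s * pd k (pd j (pd i F)) z.
Proof.
move=> z0 i j k; have dF : derivable (pd j (pd i F)) z (e_ k) :=
  smooth_derivable F_smooth z0 [:: j; i] _.
transitivity (pd k (fun w => expR s * pd j (pd i F) w) z); last exact: pdZ.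
by apply: near_eq_derive; apply: filterS (near_neq0 z0) => w w0; apply: pd2_conf_beta.
Qed.

End ConformalBetaDerivatives.

Section JetOfFinsler.
Variable F : V -> R.
Hypothesis F_smooth : smooth_off0 F.

Lemma gF_jet z : z != 0 ->
  gF F z = jet_metric (F z) (fun i => pd i F z) (fun i j => pd j (pd i F) z).
Proof.
move=> z0; apply/matrixP => i j; rewrite !mxE.
transitivity (2^-1 * pd j (fun w => 2 * (F w * pd i F w)) z).
  congr (_ * _); apply: near_eq_derive; apply: filterS (near_neq0 z0) => w w0 /=.
  have dF : derivable F w (e_ i) := smooth_derivable F_smooth w0 [::] _.
  rewrite (_ : (fun y => F y ^+ 2) = (fun y => F y * F y)); last first.
    by apply: funext => y; rewrite expr2.
  by rewrite (pdM dF dF) mulrC -mulr2n mulr_natl.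
have dF : derivable F z (e_ j) := smooth_derivable F_smooth z0 [::] _.
have dFi : derivable (pd i F) z (e_ j) := smooth_derivable F_smooth z0 [:: i] _.
have dFFi : derivable (fun w => F w * pd i F w) z (e_ j) := derivableM dF dFi.
rewrite (pdZ _ dFFi) (pdM dF dFi) mulKf; last by rewrite pnatr_eq0.
by rewrite [pd j F z * _]mulrC.
Qed.

Lemma cF_jet z (i j k : 'I_n) : z != 0 ->
  cF F i j k z = jet_cartan (F z) (fun p => pd p F z) (fun p q => pd q (pd p F) z)
    (fun p q r => pd r (pd q (pd p F)) z) i j k.
Proof.
move=> z0; rewrite /cF /jet_cartan.
transitivity (2^-1 * pd k (fun w => pd i F w * pd j F w + F w * pd j (pd i F) w) z).
  congr (_ * _); apply: near_eq_derive; apply: filterS (near_neq0 z0) => w w0.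
  by rewrite (gF_jet w0) mxE.
have d0 : derivable F z (e_ k) := smooth_derivable F_smooth z0 [::] _.
have di : derivable (pd i F) z (e_ k) := smooth_derivable F_smooth z0 [:: i] _.
have dj : derivable (pd j F) z (e_ k) := smooth_derivable F_smooth z0 [:: j] _.
have dij : derivable (pd j (pd i F)) z (e_ k) :=
  smooth_derivable F_smooth z0 [:: j; i] _.
have d1 : derivable (fun w => pd i F w * pd j F w) z (e_ k) := derivableM di dj.
have d2 : derivable (fun w => F w * pd j (pd i F) w) z (e_ k) := derivableM d0 dij.
by rewrite (pdD d1 d2) (pdM di dj) (pdM d0 dij).
Qed.

Lemma gF_jetE z (l : 'I_n -> R) (P : 'I_n -> 'I_n -> R) : z != 0 ->
  (forall p, pd p F z = l p) -> (forall p q, pd q (pd p F) z = P p q) ->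
  gF F z = jet_metric (F z) l P.
Proof.
move=> z0 hl hP; rewrite (gF_jet z0).
by congr jet_metric; do ?[apply: funext => ?]; rewrite ?hl ?hP.
Qed.

Lemma KF_jet z (l : 'I_n -> R) (P : 'I_n -> 'I_n -> R) (T : 'I_n -> 'I_n -> 'I_n -> R) :
  z != 0 -> (forall p, pd p F z = l p) -> (forall p q, pd q (pd p F) z = P p q) ->
  (forall p q r, pd r (pd q (pd p F)) z = T p q r) ->
  forall i j k,
    KF F i j k z = K_tensor (F z) l (jet_metric (F z) l P) (jet_cartan (F z) l P T) i j k.
Proof.
move=> z0 hl hP hT i j k.
have cE : (fun p q r => cF F p q r z) = jet_cartan (F z) l P T.
  do 3 apply: funext => ?; rewrite (cF_jet _ _ _ z0).
  by congr jet_cartan; do ?[apply: funext => ?]; rewrite ?hl ?hP ?hT.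
by rewrite -cE -(gF_jetE z0 hl hP) -(funext hl).
Qed.

End JetOfFinsler.
End FinslerDerivatives.

Lemma posdef_unitmx (R : realType) n (A : 'M[R]_n) : posdef A -> A \in unitmx.
Proof.
move=> A_pos; rewrite unitmxE unitfE; apply/negP => /det0P[v v0 vA].
by have := A_pos v v0; rewrite vA mul0mx mxE ltxx.
Qed.

Theorem proposition1 (R : realType) (n : nat)
  (L : 'rV[R]_n -> 'rV[R]_n -> R) (sigma : 'rV[R]_n -> R)
  (b : 'rV[R]_n -> 'rV[R]_n) :
  (3 <= n)%N ->
  (forall x, is_finsler (L x)) ->
  (forall x, is_finsler (conf_beta (L x) (sigma x) (b x))) ->
  forall (x y : 'rV[R]_n), y != 0 -> forall i j k : 'I_n,
    KF (conf_beta (L x) (sigma x) (b x)) i j k y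
      = expR (sigma x) * KF (L x) i j k y.
Proof.
move=> _ HL HG x y y0 i j k.
have [L_pos _ L_smooth L_posdef] := HL x; have [G_pos _ G_smooth G_posdef] := HG x.
have l' := pd_conf_beta (sigma x) (b x) L_smooth y0.
have P' := pd2_conf_beta (sigma x) (b x) L_smooth y0.
have T' := pd3_conf_beta (sigma x) (b x) L_smooth y0.
rewrite (KF_jet G_smooth y0 l' P' T').
rewrite (KF_jet L_smooth y0 (fun p => erefl) (fun p q => erefl) (fun p q r => erefl)).
apply: (@K_tensor_conf R n (L x y) (expR (sigma x)) (fun p => pd p (L x) y)
  (fun p => b x 0 p) (fun p => y 0 p) (fun p q => pd q (pd p (L x)) y)
  (fun p q r => pd r (pd q (pd p (L x))) y)).
- exact: lt0r_neq0 (L_pos y y0).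
- exact: lt0r_neq0 (expR_gt0 (sigma x)).
- exact: lt0r_neq0 (G_pos y y0).
- by move=> p q; exact: (pdC L_smooth y0 [::]).
- by move=> p q r; exact: (pdC_inner p q r L_smooth y0).
- by move=> p q r; exact: (pdC L_smooth y0 [:: p]).
- exact (euler_grad (HL x) y0).
- by move=> q; exact: (euler_hessian (HL x) q y0).
- by move=> q r; exact: (euler_third (HL x) q r y0).
- rewrite -(gF_jetE L_smooth y0 (fun p => erefl) (fun p q => erefl)).
  exact: posdef_unitmx (L_posdef y y0).
- by have := posdef_unitmx (G_posdef y y0); rewrite (gF_jetE G_smooth y0 l' P').
Qed.
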